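(* Every instance of the Balancing with Conflicts game with $n$ players and $m$ machines satisfies: - if $n\ge m$, it is $\left(2-\frac1m+\frac{m-1}{n},\,0\right)$-semi-smooth; - if $n<m$, it is $\left(1+\frac{2n-2}{m},\,0\right)$-semi-smooth. In both cases the witnessing mixed strategy has every player choose each machine with probability $\frac1m$.
   Context: An instance of the Balancing with Conflicts (BwC) game consists of: - players $N=\{1,\dots,n\}$; - machines $M=\{1,\dots,m\}$; - a simple undirected graph $G=(N,E)$. Each player chooses one machine, so a state is $\vec s\in M^n$. Let $X_k(\vec s)=\{i:s_i=k\}$ and $x_k(\vec s)=|X_k(\vec s)|$. For $X\subseteq N$, $e(X)$ is the number of edges of $G$ with both endpoints in $X$. For a player $i$, $e(\{i\},X)$ is the number of neighbours of $i$ in $X$. The cost of player $i$ with $s_i=k$ is $c_i(\vec s)=x_k(\vec s)+e(\{i\},X_k(\vec s))$. The social cost is $$c(\vec s)=\sum_ic_i(\vec s)=\sum_{k=1}^m\big(x_k(\vec s)^2+2e(X_k(\vec s))\big),$$ and $\vec s^*$ is a state minimizing $c$. A cost-minimization game is $(\lambda,\mu)$-semi-smooth if there exist probability distributions $\sigma_i$ over the strategies of each player $i$ such that for every state $\vec s$, $$\sum_{i\in N}\mathbf E_{s_i'\sim\sigma_i}[c_i(s_i',\vec s_{-i})]\le\lambda c(\vec s^* )+\mu c(\vec s).$$ *)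

From HB Require Import structures.
From mathcomp Require Import all_boot all_order all_algebra.
Set Implicit Arguments. Unset Strict Implicit. Unset Printing Implicit Defensive.
Import Order.TTheory GRing.Theory Num.Theory.

(* Players are 'I_n, machines are 'I_m; the conflict graph is a simple
   undirected graph given by a symmetric irreflexive relation e on 'I_n. *)
Definition simple_graph (n : nat) (e : rel 'I_n) : Prop :=
  symmetric e /\ irreflexive e.

Definition state (n m : nat) := {ffun 'I_n -> 'I_m}.

Definition load_set n m (s : state n m) (k : 'I_m) : {set 'I_n} :=
  [set j | s j == k].

Definition player_cost n m (e : rel 'I_n) (s : state n m) (i : 'I_n) : nat :=
  #|load_set s (s i)| + #|[set j in load_set s (s i) | e i j]|.

Definition social_cost n m (e : rel 'I_n) (s : state n m) : nat :=
  \sum_(i < n) player_cost e s i.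

Definition is_optimal n m (e : rel 'I_n) (s : state n m) : Prop :=
  forall t : state n m, (social_cost e s <= social_cost e t)%N.

Definition deviate n m (s : state n m) (i : 'I_n) (k : 'I_m) : state n m :=
  [ffun j => if j == i then k else s j].

(* (lambda, mu)-semi-smoothness witnessed by the mixed strategies sigma
   (sigma i k = probability that player i picks machine k). *)
Local Open Scope ring_scope.
Definition semi_smooth_with (R : realFieldType) n m (e : rel 'I_n)
    (sigma : 'I_n -> 'I_m -> R) (lambda mu : R) : Prop :=
  [/\ (forall i k, 0 <= sigma i k),
      (forall i, \sum_(k < m) sigma i k = 1) &
      forall sopt : state n m, is_optimal e sopt ->
      forall s : state n m,
        \sum_(i < n) \sum_(k < m) sigma i k * (player_cost e (deviate s i k) i)%:R
          <= lambda * (social_cost e sopt)%:R + mu * (social_cost e s)%:R].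

Definition uniform_strategy (R : realFieldType) (n m : nat) : 'I_n -> 'I_m -> R :=
  fun _ _ => (m%:R)^-1.

From HB Require Import structures.
From mathcomp Require Import all_boot all_order all_algebra.
Import Order.TTheory GRing.Theory Num.Theory.
From mathcomp Require Import zify ring lra.
Set Implicit Arguments.

(* The cost of player i deviating to machine k does not depend on s_i, and
   summing it over all k counts every other player once, player i itself
   m times and every neighbour of i once.  Hence the total expected
   deviation cost is C/m with C + n = n(m + n) + 2|E|, independently of s.
   For any state t write A = sum_k x_k(t)^2 (ordered pairs of players sharing
   a machine) and B = sum_k 2 e(X_k(t)) (ordered adjacent pairs sharing a
   machine), so that c(t) = A + B.  An ordered pair counted both by 2|E| and
   by A is counted by B, whence 2|E| + A <= B + n^2, i.e.
       C + A + n <= n m + 2 n^2 + B.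
   Together with A >= n and, by Cauchy-Schwarz, m A >= n^2, two elementary
   real inequalities (one per regime n >= m, n < m) bound C/m by lambda (A+B). *)

Local Open Scope ring_scope.

(* Cauchy-Schwarz against the all-ones vector: (sum x)^2 <= m * sum x^2,
   read off from 0 <= sum_k (m x_k - sum x)^2 = m (m sum x^2 - (sum x)^2). *)
Lemma sqr_sum_le (R : realDomainType) (m : nat) (x : 'I_m -> R) :
  (\sum_k x k) ^+ 2 <= m%:R * \sum_k x k ^+ 2.
Proof.
case: m x => [|m] x; first by rewrite !big_ord0 expr0n mul0r.
set s := \sum_k x k; set q := \sum_k x k ^+ 2.
have spread : 0 <= \sum_k (m.+1%:R * x k - s) ^+ 2.
  by apply: sumr_ge0 => k _; exact: sqr_ge0.
have spreadE : \sum_k (m.+1%:R * x k - s) ^+ 2 = m.+1%:R * (m.+1%:R * q - s ^+ 2).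
  under eq_bigr => k _ do rewrite sqrrB exprMn.
  rewrite big_split sumrB /= sumr_const card_ord -mulr_sumr -/q.
  rewrite sumrMnl -mulr_suml -mulr_sumr -/s; ring.
by rewrite spreadE pmulr_rge0 ?ltr0Sn // subr_ge0 in spread.
Qed.
Local Close Scope ring_scope.

Lemma card_set_sum (T : finType) (P : pred T) : #|[set x | P x]| = \sum_x (P x : nat).
Proof. by rewrite -sum1dep_card big_mkcond; apply: eq_bigr => x _; case: (P x). Qed.

Lemma sum_indicator (T : finType) (a : T) : \sum_x (a == x : nat) = 1.
Proof. by rewrite (bigD1 a) //= eqxx big1 // => x; rewrite eq_sym => /negbTE ->. Qed.

Section Counting.
Variables (n m : nat).
Implicit Types (e : rel 'I_n) (s t : state n m).

Definition coload t : nat := \sum_(i < n) \sum_(j < n) (t j == t i : nat).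
Definition conflict_pairs e t : nat :=
  \sum_(i < n) \sum_(j < n) ((t j == t i) && e i j : nat).
Definition edge_pairs e : nat := \sum_(i < n) \sum_(j < n) (e i j : nat).
(* Total cost of all unilateral deviations from s: m times the left-hand
   side of the semi-smoothness inequality for the uniform strategy. *)
Definition deviation_total e s : nat :=
  \sum_(i < n) \sum_(k < m) player_cost e (deviate s i k) i.
Definition machine_load t (k : 'I_m) : nat := \sum_(i < n) (t i == k : nat).

Lemma social_costE e t : social_cost e t = coload t + conflict_pairs e t.
Proof.
rewrite /social_cost -big_split; apply: eq_bigr => i _.
by rewrite /player_cost /load_set !card_set_sum; congr (_ + _);
  apply: eq_bigr => j _; rewrite !inE.
Qed.

(* When i moves to k, the players on k are i and the others already on k;
   i has no self-loop, so its conflicts are its neighbours already on k. *)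
Lemma deviation_cost e s i k : irreflexive e ->
  player_cost e (deviate s i k) i =
  \sum_(j < n) ((j == i) || (s j == k) : nat) + \sum_(j < n) ((s j == k) && e i j : nat).
Proof.
move=> e_irr; rewrite /player_cost /load_set !card_set_sum /deviate ffunE eqxx.
congr (_ + _); apply: eq_bigr => j _; rewrite ?inE ffunE.
  by case: (j == i); rewrite ?eqxx.
by case: (eqVneq j i) => [->|]; rewrite ?e_irr ?andbF.
Qed.

(* Summed over k: m for i itself, 1 for each other player and each neighbour. *)
Lemma player_deviation_costs e s i : irreflexive e ->
  (\sum_(k < m) player_cost e (deviate s i k) i).+1 = m + n + \sum_(j < n) (e i j : nat).
Proof.
move=> e_irr; under eq_bigr => k _ do rewrite deviation_cost // (bigD1 i) //= eqxx.
rewrite !big_split /= sum_nat_const card_ord muln1.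
have others : (\sum_(k < m) \sum_(j < n | j != i) ((j == i) || (s j == k) : nat)).+1 = n.
  rewrite exchange_big /= -[RHS]card_ord -sum1_card [RHS](bigD1 i) //= add1n; congr _.+1.
  by apply: eq_bigr => j /negbTE ->; exact: sum_indicator.
have neighbours :
    \sum_(k < m) \sum_(j < n) ((s j == k) && e i j : nat) = \sum_(j < n) (e i j : nat).
  rewrite exchange_big; apply: eq_bigr => j _ /=.
  by case: (e i j); under eq_bigr => k _ do rewrite ?andbT ?andbF; rewrite ?sum_indicator ?big1.
by rewrite neighbours -[X in _ = m + X + _]others addnS addSn.
Qed.

Lemma deviation_totalE e s : irreflexive e ->
  deviation_total e s + n = n * (m + n) + edge_pairs e.
Proof.
move=> e_irr; rewrite -[X in _ + X]card_ord -sum1_card -big_split /=.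
under eq_bigr => i _ do rewrite addn1 player_deviation_costs //.
by rewrite big_split /= sum_nat_const card_ord mulnC.
Qed.

(* Every ordered pair is counted at most once by 2|E| + A - B. *)
Lemma edge_pairs_bound e t : edge_pairs e + coload t <= conflict_pairs e t + n * n.
Proof.
rewrite -[n in n * _]card_ord -sum_nat_const -!big_split /=; apply: leq_sum => i _.
rewrite -[X in _ <= _ + X]card_ord -sum1_card -!big_split /=; apply: leq_sum => j _.
by case: (e i j); case: (t j == t i).
Qed.

(* Each player shares its machine with itself: A >= n. *)
Lemma coload_ge t : n <= coload t.
Proof.
rewrite -[n]card_ord -sum1_card; apply: leq_sum => i _.
by rewrite (bigD1 i) //= eqxx.
Qed.

Lemma machine_load_sum t : \sum_(k < m) machine_load t k = n.
Proof.
rewrite exchange_big /= -[RHS]card_ord -sum1_card; apply: eq_bigr => i _.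
exact: sum_indicator.
Qed.

Lemma coloadE t : coload t = \sum_(k < m) machine_load t k ^ 2.
Proof.
under [RHS]eq_bigr => k _ do rewrite /machine_load expnS expn1 big_distrl /=.
rewrite [RHS]exchange_big; apply: eq_bigr => i _ /=.
rewrite [RHS](bigD1 (t i)) //= eqxx mul1n [X in _ = _ + X]big1 ?addn0 // => k.
by rewrite eq_sym => /negbTE ->.
Qed.

(* Cauchy-Schwarz on the loads: n^2 <= m A. *)
Lemma coload_lower t : n * n <= m * coload t.
Proof.
have := @sqr_sum_le int m (fun k => (machine_load t k)%:R%R).
under [X in (_ <= _ * X)%R -> _]eq_bigr => k _ do rewrite -natrX.
by rewrite -!natr_sum machine_load_sum -coloadE -natrX -natrM ler_nat mulnn.
Qed.

Lemma deviation_bound e s t : irreflexive e ->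
  deviation_total e s + coload t + n <= n * m + 2 * (n * n) + conflict_pairs e t.
Proof.
move=> e_irr; have := deviation_totalE s e_irr; have := edge_pairs_bound e t; lia.
Qed.

End Counting.

Local Open Scope ring_scope.

(* The regime n >= m (only n > 0 is used): multiplying by m, the terms in A
   are covered by 2 m A >= 2 n^2 and (m-1)/n * m A >= (m-1) n. *)
Lemma many_players_bound (R : realFieldType) (n m A B C : R) :
  0 < n -> 1 <= m -> 0 <= B -> n * n <= m * A ->
  C + A + n <= n * m + 2 * (n * n) + B ->
  m^-1 * C <= (2 - m^-1 + (m - 1) / n) * (A + B).
Proof.
move=> n_gt0 m_ge1 B_ge0 A_ge cost_le.
have m_gt0 : 0 < m by lra.
rewrite -(ler_pM2l m_gt0) mulrA mulfV ?gt_eqF // mul1r.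
set a := (m - 1) / n.
have a_ge0 : 0 <= a by rewrite divr_ge0 ?subr_ge0 // ltW.
have an : a * n = m - 1 by rewrite /a mulfVK ?gt_eqF.
have aA : (m - 1) * n <= a * (m * A) by rewrite -an -mulrA ler_wpM2l.
have aB : 0 <= a * (m * B) by rewrite mulr_ge0 // mulr_ge0 // ltW.
have -> : m * ((2 - m^-1 + a) * (A + B)) = (2 * m - 1) * (A + B) + a * (m * A) + a * (m * B).
  by field; rewrite gt_eqF.
nra.
Qed.

(* The regime n < m (for n >= 1): multiplying by m, the terms in A are
   covered by (m + 2n - 1) A >= (m + 2n - 1) n. *)
Lemma few_players_bound (R : realFieldType) (n m A B C : R) :
  1 <= n -> 1 <= m -> 0 <= B -> n <= A ->
  C + A + n <= n * m + 2 * (n * n) + B ->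
  m^-1 * C <= (1 + (2 * n - 2) / m) * (A + B).
Proof.
move=> n_ge1 m_ge1 B_ge0 A_ge cost_le.
have m_gt0 : 0 < m by lra.
rewrite -(ler_pM2l m_gt0) mulrA mulfV ?gt_eqF // mul1r.
have -> : m * ((1 + (2 * n - 2) / m) * (A + B)) = (m + 2 * n - 2) * (A + B).
  by field; rewrite gt_eqF.
nra.
Qed.

Lemma uniform_semi_smooth (R : realFieldType) n m (e : rel 'I_n) (lambda : R) :
  (0 < m)%N ->
  (forall s t : state n m,
     m%:R^-1 * (deviation_total e s)%:R <= lambda * (social_cost e t)%:R) ->
  semi_smooth_with e (@uniform_strategy R n m) lambda 0.
Proof.
move=> m_gt0 bound; split=> [i k | i | sopt _ s]; rewrite /uniform_strategy.
- by rewrite invr_ge0 ler0n.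
- by rewrite sumr_const card_ord -[LHS]mulr_natr mulVf // pnatr_eq0 -lt0n.
rewrite mul0r addr0 (_ : \sum_i _ = m%:R^-1 * (deviation_total e s)%:R) ?bound //.
by rewrite natr_sum mulr_sumr; apply: eq_bigr => i _; rewrite natr_sum mulr_sumr.
Qed.

Lemma sum_no_players (n : nat) (F : 'I_n -> nat) : n = 0%N -> (\sum_(i < n) F i = 0)%N.
Proof. by move=> n0; apply: big1 => i _; suff : (i < 0)%N by []; rewrite -n0. Qed.

Theorem theorem4 (R : realFieldType) (n m : nat) (e : rel 'I_n)
    (He : simple_graph e) (Hm : (0 < m)%N) :
  ((m <= n)%N ->
     semi_smooth_with e (@uniform_strategy R n m)
       (2 - (m%:R)^-1 + (m%:R - 1) / n%:R) 0) /\
  ((n < m)%N ->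
     semi_smooth_with e (@uniform_strategy R n m)
       (1 + (2 * n%:R - 2) / m%:R) 0).
Proof.
have [_ e_irr] := He.
have cost_le (s t : state n m) : (deviation_total e s)%:R + (coload t)%:R + n%:R
    <= n%:R * m%:R + 2 * (n%:R * n%:R) + (conflict_pairs e t)%:R :> R.
  by rewrite -!natrM -!natrD ler_nat deviation_bound.
split=> [le_mn | lt_nm]; apply: uniform_semi_smooth => // s t.
  rewrite social_costE natrD; apply: many_players_bound (cost_le s t).
  - by rewrite ltr0n (leq_trans Hm).
  - by rewrite ler1n.
  - by rewrite ler0n.
  - by rewrite -!natrM ler_nat coload_lower.
have [n0 | n_gt0] := posnP n.
  by rewrite /deviation_total /social_cost !sum_no_players // !mulr0.
rewrite social_costE natrD; apply: few_players_bound (cost_le s t).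
- by rewrite ler1n.
- by rewrite ler1n.
- by rewrite ler0n.
- by rewrite ler_nat coload_ge.
Qed.
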